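(* Let $k\ge 1$ and let $G$ be a $k$-degenerate graph. Define a sequence of edge sets as follows. Set $\Lambda_0=\emptyset$. For $i \ge 1$, let $G_i$ be the graph formed by the edges of $E(G)\setminus(\Lambda_0\cup\dots\cup\Lambda_{i-1})$ (with their endpoints), and let $\deg_i(v)$ denote the degree of $v$ in $G_i$. If $G_i$ has at least one edge, choose a vertex $w_i$ of $G_i$ such that at least $\max\{1,\deg_i(w_i)-k\}$ of its neighbors in $G_i$ have $\deg_i \le k$ (such a vertex always exists), and set $\Lambda_i=\{w_iv : w_iv\in E(G_i),\ \deg_i(v)\le k\}$; the vertex $w_i$ is called the center of $\Lambda_i$. The process stops at the first $m$ for which $G_{m+1}$ has no edges. Then for all $1\le i<j\le m$, the centers $w_i$ and $w_j$ are distinct.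
   Context: All graphs are finite and simple. A graph is $k$-degenerate if every subgraph of it has a vertex of degree at most $k$. *)

(* A simple graph on vertex set T is a symmetric irreflexive e : rel T. *)
From mathcomp Require Import all_boot.
Set Implicit Arguments. Unset Strict Implicit. Unset Printing Implicit Defensive.

Section Degeneracy.
Variable T : finType.

Definition deg (E : rel T) (v : T) : nat := #|[set u | E v u]|.

(* G is k-degenerate: every (nonempty) subgraph (A, f), with f a symmetric
   sub-relation of e on A, has a vertex of degree at most k. *)
Definition degenerate (k : nat) (e : rel T) : Prop :=
  forall (A : {set T}) (f : rel T),
    A != set0 -> symmetric f -> (forall x y, f x y -> e x y) ->
    exists2 v, v \in A & #|[set u in A | f v u]| <= k.

Definition has_edge (E : rel T) : bool := [exists x, exists y, E x y].

(* E with Lambda = { w v : E w v, deg_E v <= k } removed *)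
Definition step (k : nat) (E : rel T) (w : T) : rel T :=
  fun x y => E x y &&
    ~~ (((x == w) && (deg E y <= k)) || ((y == w) && (deg E x <= k))).

Definition valid_center (k : nat) (E : rel T) (w : T) : bool :=
  has_edge E &&
  (maxn 1 (deg E w - k) <= #|[set v | E w v && (deg E v <= k)]|).

(* ws = [:: w_1; ...; w_m] is a complete run of the process starting from E:
   each w_i is a valid center of G_i, and G_(m+1) has no edges. *)
Fixpoint valid_run (k : nat) (E : rel T) (ws : seq T) : bool :=
  match ws with
  | [::] => ~~ has_edge E
  | w :: ws' => valid_center k E w && valid_run k (step k E w) ws'
  end.

End Degeneracy.

From mathcomp Require Import all_boot.
From mathcomp Require Import zify.

(* Call a vertex w "retired" in a graph E when deg_E w <= k and every
   neighbour of w has degree > k.  The proof rests on three facts: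
   - right after w is used as a center, w is retired: the removed set
     Lambda has at least deg w - k edges at w, and the surviving neighbours
     of w are exactly those of degree > k, whose degrees are unchanged;
   - retirement is preserved by any later step with another center u: no
     edge at w is removed (its other end has degree > k and is not u, and
     w is not u) and all degrees only decrease;
   - a retired vertex is never a valid center, since a valid center needs at
     least one neighbour of degree <= k.
   Hence a center never reappears later in a run, which gives uniqueness by
   induction on the run. *)

Section Peeling.
Variables (T : finType) (k : nat).
Implicit Types (E : rel T) (u v w : T).

Lemma step_sub {E u x y} : step k E u x y -> E x y.
Proof. by case/andP. Qed.

Lemma step_irreflexive {E} u : irreflexive E -> irreflexive (step k E u).
Proof. by move=> irrE x; apply/negP => /step_sub; rewrite irrE. Qed.

Lemma deg_step_le E u v : deg (step k E u) v <= deg E v.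
Proof. by apply/subset_leq_card/subsetP => y; rewrite !inE => /step_sub. Qed.

Lemma deg_step_high E u v : v != u -> k < deg E v -> deg (step k E u) v = deg E v.
Proof.
move=> vu hv; apply: eq_card => y; rewrite !inE /step (negbTE vu) /=.
by rewrite leqNgt hv andbF andbT.
Qed.

Definition retired E w : Prop :=
  deg E w <= k /\ forall v, E w v -> k < deg E v.

Lemma retired_after_center {E w} :
  irreflexive E -> valid_center k E w -> retired (step k E w) w.
Proof.
move=> irrE /andP [_ hvalid]; split.
  set L := [set v | E w v && (deg E v <= k)].
  have survivors : [set y | step k E w w y] \subset [set y | E w y] :\: L.
    apply/subsetP => y; rewrite !inE /step eqxx /= negb_or => /andP [-> /andP [+ _]] => ->.
    done.
  have L_nbhd : L \subset [set y | E w y].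
    by apply/subsetP => y; rewrite !inE => /andP [].
  have := subset_leq_card survivors; rewrite cardsD (setIidPr L_nbhd).
  by move: hvalid; rewrite /deg -/L; lia.
move=> v hs; have hE := step_sub hs.
have high : k < deg E v.
  by move: hs; rewrite /step eqxx /= ltnNge; case: (deg E v <= k); rewrite /= ?andbF.
have vw : v != w by apply: contraTneq hE => ->; rewrite irrE.
by rewrite deg_step_high.
Qed.

Lemma retired_step_other {E u w} : retired E w -> u != w -> retired (step k E u) w.
Proof.
move=> [hdeg hnb] uw; split; first exact: leq_trans (deg_step_le _ _ _) hdeg.
move=> v hs; have hE := step_sub hs; have high := hnb v hE.
have vu : v != u.
  by apply/negP => /eqP vu; move: hs; rewrite /step hE vu eqxx hdeg orbT.
by rewrite deg_step_high.
Qed.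

Lemma retired_not_center {E w} : retired E w -> ~~ valid_center k E w.
Proof.
move=> [_ hnb]; apply/negP => /andP [_ hvalid].
have : 0 < #|[set v | E w v && (deg E v <= k)]|.
  by apply: leq_trans hvalid; rewrite leq_max.
case/card_gt0P => v; rewrite inE => /andP [hE low].
by move: (hnb v hE); rewrite ltnNge low.
Qed.

Lemma retired_notin_run E w ws :
  irreflexive E -> retired E w -> valid_run k E ws -> w \notin ws.
Proof.
elim: ws E => [//|u ws IH] E irrE hret /= /andP [hcenter hrun].
have uw : u != w.
  by apply: contraTneq hcenter => ->; exact: retired_not_center.
rewrite in_cons negb_or eq_sym uw /=.
exact: IH (step_irreflexive u irrE) (retired_step_other hret uw) hrun.
Qed.

Lemma valid_run_uniq E ws : irreflexive E -> valid_run k E ws -> uniq ws.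
Proof.
elim: ws E => [//|w ws IH] E irrE /= /andP [hcenter hrun].
have irrE' := step_irreflexive w irrE.
rewrite (IH _ irrE' hrun) andbT.
exact: retired_notin_run irrE' (retired_after_center irrE hcenter) hrun.
Qed.

End Peeling.

Theorem mainTheorem3 (T : finType) (e : rel T) (k : nat) (ws : seq T) :
  1 <= k -> symmetric e -> irreflexive e -> degenerate k e ->
  valid_run k e ws -> uniq ws.
Proof. by move=> _ _ irr_e _; exact: valid_run_uniq. Qed.
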